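(* In the reward setting described in the context, for every choice of $\bar d\le D/2$ there is an instance (whose second largest expected delay is $\bar d$) for which every algorithm has pseudo-regret $\Omega(\bar d)$.
   Context: Delay-as-payoff bandit: there are $K$ arms, a horizon $T$ and a maximum delay $D$. Each arm $i$ has a distribution $\mathcal{D}_i$ on $\{0,1,\dots,D\}$; at each step $t$ the agent chooses $i_t$ based on observed feedback, a delay $d_t\sim\mathcal{D}_{i_t}$ is drawn independently and revealed only at time $t+d_t$; the payoff is the reward $r_t=d_t/D$, to be maximized. Let $\mu(i)=\mathbb{E}_{X\sim\mathcal{D}_i}[X/D]$, $d(i)=D\mu(i)$, $\mu^*=\max_i\mu(i)$, and $\bar d$ the second largest value among $d(1),\dots,d(K)$. Pseudo-regret: $T\mu^*-\mathbb{E}[\sum_{t=1}^T r_t]$. *)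

From mathcomp Require Import all_boot all_order all_algebra.
Set Implicit Arguments. Unset Strict Implicit. Unset Printing Implicit Defensive.
Import Order.TTheory GRing.Theory Num.Theory.
Local Open Scope ring_scope.

Section Bandit.
Variables (R : realFieldType) (K D : nat).

Notation arm := 'I_K.
Notation delay := 'I_D.+1.

Definition instance := arm -> delay -> R.
Definition is_instance (nu : instance) : Prop :=
  (forall i x, 0 <= nu i x) /\ (forall i, \sum_(x : delay) nu i x = 1).

Definition mu (nu : instance) (i : arm) : R :=
  \sum_(x : delay) nu i x * ((x : nat)%:R / D%:R).
Definition dexp (nu : instance) (i : arm) : R := D%:R * mu nu i.
Definition mu_star (nu : instance) : R := \big[Num.max/0]_(i : arm) mu nu i.

Definition second_largest_delay (nu : instance) : R :=
  nth 0 (sort (fun x y : R => y <= x) [seq dexp nu i | i <- enum arm]) 1.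

(* Feedback of step s (delay d) is revealed at time s + d; at decision time
   t = size h the agent sees it iff s + d < t. *)
Definition observe (h : seq (arm * delay)) : seq (arm * option delay) :=
  [seq (sp.2.1, if (sp.1 + sp.2.2 < size h)%N then Some sp.2.2 else None)
  | sp : nat * (arm * delay) <- zip (iota 0 (size h)) h].

Definition policy := seq (arm * option delay) -> arm -> R.
Definition is_policy (alg : policy) : Prop :=
  forall o, (forall i, 0 <= alg o i) /\ \sum_(i : arm) alg o i = 1.

Definition traj_prob (nu : instance) (alg : policy) (T : nat)
  (h : T.-tuple (arm * delay)) : R :=
  \prod_(s < T) (alg (observe (take s h)) (tnth h s).1
                 * nu (tnth h s).1 (tnth h s).2).

Definition expected_reward (nu : instance) (alg : policy) (T : nat) : R :=
  \sum_(h : T.-tuple (arm * delay))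
     traj_prob nu alg h * \sum_(s < T) (((tnth h s).2 : nat)%:R / D%:R).

Definition pseudo_regret (nu : instance) (alg : policy) (T : nat) : R :=
  T%:R * mu_star nu - expected_reward nu alg T.

End Bandit.

(* Pick naturals m <= dbar <= n with n <= min (m + 1, T), and for each arm j the
   instance in which arm j always has delay D (reward 1) while every other arm has
   delay D or m, with mean dbar.  All delays are at least m, so no feedback arrives
   during the first m + 1 rounds: there the algorithm plays blind, identically on
   all these instances.  In each blind round the probabilities of missing arm 0 and
   of missing arm 1 add up to at least 1, and a miss costs 1 - dbar / D >= 1 / 2;
   hence over the first n rounds the instances j = 0 and j = 1 together incur
   regret at least n / 2 >= dbar / 2, and one of them at least dbar / 4. *)

From mathcomp Require Import all_boot all_order all_algebra.
From mathcomp Require Import ring lra.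
Import Order.TTheory GRing.Theory Num.Theory.
Local Open Scope ring_scope.
Set Implicit Arguments. Unset Strict Implicit. Unset Printing Implicit Defensive.

Section SeqKernel.
Variables (R : realFieldType) (X : finType).
Implicit Types (w : seq X -> X -> R) (h : seq X) (F G : seq X -> R).

Definition is_kernel w := forall h, (forall x, 0 <= w h x) /\ \sum_x w h x = 1.

Fixpoint expect_steps w r h F : R :=
  if r is r'.+1 then \sum_x w h x * expect_steps w r' (rcons h x) F else F h.

Lemma expect_stepsD w r h F G :
  expect_steps w r h (fun h => F h + G h) =
  expect_steps w r h F + expect_steps w r h G.
Proof.
elim: r h => [|r IH] h //=.
by rewrite -big_split; apply: eq_bigr => x _; rewrite IH mulrDr.
Qed.

Lemma expect_stepsB w r h F G :
  expect_steps w r h (fun h => F h - G h) =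
  expect_steps w r h F - expect_steps w r h G.
Proof.
elim: r h => [|r IH] h //=.
by rewrite -sumrB; apply: eq_bigr => x _; rewrite IH mulrBr.
Qed.

Lemma expect_stepsZ w r h c F :
  expect_steps w r h (fun h => c * F h) = c * expect_steps w r h F.
Proof.
elim: r h => [|r IH] h //=.
by rewrite mulr_sumr; apply: eq_bigr => x _; rewrite IH mulrCA.
Qed.

Lemma expect_steps_sum w r h n (F : 'I_n -> seq X -> R) :
  expect_steps w r h (fun h => \sum_(k < n) F k h) =
  \sum_(k < n) expect_steps w r h (F k).
Proof.
elim: r h => [|r IH] h //=.
by rewrite exchange_big; apply: eq_bigr => x _; rewrite IH mulr_sumr.
Qed.

Lemma expect_steps_split w r1 r2 h F :
  expect_steps w (r1 + r2) h F =
  expect_steps w r1 h (fun h' => expect_steps w r2 h' F).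
Proof. by elim: r1 h => [|r1 IH] h //=; apply: eq_bigr => x _; rewrite IH. Qed.

Lemma eq_expect_steps w r h F G :
  (forall h', size h' = r -> F (h ++ h') = G (h ++ h')) ->
  expect_steps w r h F = expect_steps w r h G.
Proof.
elim: r h => [|r IH] h FG /=; first by rewrite -(cats0 h); apply: FG.
apply: eq_bigr => x _; congr (_ * _); apply: IH => h' sh'.
by rewrite cat_rcons; apply: FG; rewrite /= sh'.
Qed.

Lemma sum_tuple_expect_steps w T h0 F :
  \sum_(t : T.-tuple X)
     (\prod_(s < T) w (h0 ++ take s t) (tnth t s)) * F (h0 ++ t) =
  expect_steps w T h0 F.
Proof.
elim: T h0 => [|T IH] h0.
  rewrite (big_pred1 [tuple]) => [|t]; last by rewrite [t]tuple0 /= eqxx.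
  by rewrite big_ord0 mul1r /= cats0.
rewrite (reindex (fun p : X * T.-tuple X => [tuple of p.1 :: p.2])) /=; last first.
  exists (fun t : T.+1.-tuple X => (thead t, [tuple of behead t])).
    by move=> [x t] _ /=; rewrite theadE; congr pair; apply: val_inj.
  by move=> t _ /=; rewrite [in RHS](tuple_eta t).
rewrite -(pair_bigA _ (fun x (t : T.-tuple X) =>
  (\prod_(s < T.+1) w (h0 ++ take s [tuple of x :: t]) (tnth [tuple of x :: t] s))
  * F (h0 ++ [tuple of x :: t]))) /=.
apply: eq_bigr => x _; rewrite -IH mulr_sumr; apply: eq_bigr => t _.
rewrite big_ord_recl /= -!mulrA cats0 cat_rcons; congr (_ * (_ * _)).
by apply: eq_bigr => s _; rewrite !(tnth_nth x) /= cat_rcons.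
Qed.

Section Kernel.
Variable w : seq X -> X -> R.
Hypothesis wP : is_kernel w.

Lemma expect_steps_cst r h c : expect_steps w r h (fun _ => c) = c.
Proof.
elim: r h => [|r IH] h //=.
under eq_bigr do rewrite IH.
by rewrite -mulr_suml (proj2 (wP h)) mul1r.
Qed.

Lemma ler_expect_steps r h F G :
  (forall h, F h <= G h) -> expect_steps w r h F <= expect_steps w r h G.
Proof.
move=> FG; elim: r h => [|r IH] h //=.
by apply: ler_sum => x _; apply: ler_wpM2l; [apply: (proj1 (wP h)) | apply: IH].
Qed.

Lemma expect_steps_ge0 r h F :
  (forall h, 0 <= F h) -> 0 <= expect_steps w r h F.
Proof. by move=> F_ge0; rewrite -(expect_steps_cst r h 0); apply: ler_expect_steps. Qed.

End Kernel.
End SeqKernel.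

Section Bandit.
Variables (R : realFieldType) (K D : nat).
Notation arm := 'I_K.
Notation delay := 'I_D.+1.
Implicit Types (nu : instance R K D) (alg : policy R K D).

Definition play_kernel nu alg (h : seq (arm * delay)) (x : arm * delay) : R :=
  alg (observe h) x.1 * nu x.1 x.2.

Lemma sum_play_kernel nu alg h (G : arm * delay -> R) :
  \sum_x play_kernel nu alg h x * G x =
  \sum_i alg (observe h) i * \sum_(d : delay) nu i d * G (i, d).
Proof.
transitivity (\sum_i \sum_(d : delay) play_kernel nu alg h (i, d) * G (i, d)).
  by rewrite pair_bigA; apply: eq_bigr => -[].
by apply: eq_bigr => i _; rewrite mulr_sumr; apply: eq_bigr => d _; rewrite mulrA.
Qed.

Lemma play_kernelP nu alg :
  is_instance nu -> is_policy alg -> is_kernel (play_kernel nu alg).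
Proof.
move=> [nu_ge0 nu_sum1] algP h; split=> [x|].
  by apply: mulr_ge0; [apply: (proj1 (algP _)) | apply: nu_ge0].
rewrite (eq_bigr (fun x => play_kernel nu alg h x * 1)) => [|x _]; last by rewrite mulr1.
rewrite sum_play_kernel -[RHS](proj2 (algP (observe h))); apply: eq_bigr => i _.
by under eq_bigr do rewrite mulr1; rewrite nu_sum1 mulr1.
Qed.

Lemma expected_reward_steps nu alg T :
  is_instance nu -> is_policy alg ->
  expected_reward nu alg T = \sum_(s < T)
    expect_steps (play_kernel nu alg) s [::]
      (fun h => \sum_i alg (observe h) i * mu nu i).
Proof.
move=> nuP algP.
pose reward (x : arm * delay) : R := (x.2 : nat)%:R / D%:R.
have -> : expected_reward nu alg T = expect_steps (play_kernel nu alg) T [::]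
    (fun h => \sum_(s < T) nth 0 (map reward h) s).
  rewrite -sum_tuple_expect_steps; apply: eq_bigr => t _; congr (_ * _).
  by apply: eq_bigr => s _; rewrite /= (nth_map (tnth t s)) ?size_tuple // -tnth_nth.
rewrite expect_steps_sum; apply: eq_bigr => s _.
have eT : T = (s + (T - s).-1.+1)%N by rewrite prednK ?subn_gt0 // subnKC // ltnW.
rewrite [X in expect_steps _ X]eT expect_steps_split; apply: eq_expect_steps => h sh /=.
rewrite sum_play_kernel; apply: eq_bigr => i _; congr (_ * _).
apply: eq_bigr => d _; congr (_ * _).
rewrite -[RHS](expect_steps_cst (play_kernelP nuP algP) (T - s).-1 (rcons h (i, d))).
apply: eq_expect_steps => h' _.
rewrite map_cat nth_cat size_map size_rcons sh ltnSn.
by rewrite map_rcons nth_rcons size_map sh ltnn eqxx.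
Qed.

End Bandit.

Section BlindPhase.
Variables (R : realFieldType) (K D : nat).
Notation arm := 'I_K.
Notation delay := 'I_D.+1.
Variables (nu : instance R K D) (alg : policy R K D) (m : nat).
Hypothesis nuP : is_instance nu.
Hypothesis nu_late : forall i (d : delay), (d < m)%N -> nu i d = 0.

Definition blind_obs (a : seq arm) : seq (arm * option delay) :=
  [seq (i, None) | i <- a].

Definition blind_kernel (a : seq arm) (i : arm) : R := alg (blind_obs a) i.

Definition delays_ge (h : seq (arm * delay)) :=
  all (fun x : arm * delay => m <= x.2)%N h.

Lemma observe_blind h :
  (size h <= m)%N -> delays_ge h -> observe h = blind_obs (map fst h).
Proof.
move=> hm /allP late; rewrite /observe /blind_obs -map_comp.
rewrite -[in RHS](@unzip2_zip _ _ (iota 0 (size h)) h) ?size_iota // -map_comp.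
apply/eq_in_map => -[s x] /(map_f snd); rewrite -/(unzip2 _) unzip2_zip ?size_iota // => xh /=.
by rewrite ltnNge (leq_trans hm) ?(leq_trans (late x xh)) ?leq_addl.
Qed.

Lemma expect_steps_blind r h0 F G :
  (size h0 + r <= m.+1)%N -> delays_ge h0 ->
  (forall h, size h = r -> delays_ge h -> F (h0 ++ h) = G (map fst (h0 ++ h))) ->
  expect_steps (play_kernel nu alg) r h0 F =
  expect_steps blind_kernel r (map fst h0) G.
Proof.
elim: r h0 => [|r IH] h0 hs late0 FG /=.
  by have := FG [::] erefl erefl; rewrite cats0.
rewrite addnS ltnS in hs.
rewrite sum_play_kernel observe_blind ?(leq_trans (leq_addr _ _) hs) //.
apply: eq_bigr => i _; congr (_ * _).
rewrite (eq_bigr (fun d => nu i d * expect_steps blind_kernel r (rcons (map fst h0) i) G)).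
  by rewrite -mulr_suml (proj2 nuP i) mul1r.
move=> d _; have [dm|md] := ltnP d m; first by rewrite nu_late ?mul0r.
congr (_ * _); have -> : rcons (map fst h0) i = map fst (rcons h0 (i, d)) by rewrite map_rcons.
apply: IH => [||h sh lateh]; first by rewrite size_rcons.
  by rewrite /delays_ge all_rcons md.
by rewrite cat_rcons; apply: FG; rewrite /= ?sh // md.
Qed.

End BlindPhase.

Lemma sort_ge_nth1_peak (R : realFieldType) (I : finType) (f : I -> R) (j : I) b :
  (1 < #|I|)%N -> b <= f j -> (forall i, i != j -> f i = b) ->
  nth 0 (sort (fun x y : R => y <= x) [seq f i | i <- enum I]) 1 = b.
Proof.
move=> I2 bj fi.
have ge_total : total (fun x y : R => y <= x) by move=> x y; apply: le_total.
have ge_trans : transitive (fun x y : R => y <= x) by move=> x y z /[swap]; apply: le_trans.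
have ge_anti : antisymmetric (fun x y : R => y <= x).
  by move=> x y /andP[yx xy]; apply: le_anti; rewrite yx xy.
have fE : perm_eq [seq f i | i <- enum I] (f j :: nseq #|I|.-1 b).
  have jI : j \in enum I by rewrite mem_enum.
  apply: perm_trans (perm_map f (perm_to_rem jI)) _; rewrite /= perm_cons.
  have -> : #|I|.-1 = size [seq f i | i <- rem j (enum I)].
    by rewrite size_map size_rem // cardE.
  suff /all_pred1P <- : all (pred1 b) [seq f i | i <- rem j (enum I)] by [].
  apply/allP => y /mapP[i]; rewrite mem_rem_uniq ?enum_uniq // inE => /andP[ij _] ->.
  by rewrite /= fi.
have sorted_peak : sorted (fun x y : R => y <= x) (f j :: nseq #|I|.-1 b).
  by elim: #|I|.-1 (f j) bj => //= k IH a ba; rewrite ba IH.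
rewrite (perm_sortP ge_total ge_trans ge_anti _ _ fE) (sorted_sort ge_trans sorted_peak) /=.
by rewrite nth_nseq -(subnKC I2).
Qed.

Section HardInstance.
Variables (R : realFieldType) (K D : nat).
Notation arm := 'I_K.
Notation delay := 'I_D.+1.

Definition dirac (k : nat) (d : delay) : R := ((d : nat) == k)%:R.

Lemma sum_diracM k (g : nat -> R) : (k <= D)%N -> \sum_d dirac k d * g d = g k.
Proof.
move=> kD; rewrite (bigD1 (Ordinal (kD : (k < D.+1)%N))) //= /dirac eqxx mul1r.
rewrite big1 ?addr0 // => d dk.
have /negbTE -> : (d : nat) != k by apply: contra dk => /eqP dk; apply/eqP/val_inj.
by rewrite mul0r.
Qed.

Lemma sum_dirac k : (k <= D)%N -> \sum_d dirac k d = 1.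
Proof.
by move=> kD; rewrite -[RHS](sum_diracM (fun=> 1) kD); apply: eq_bigr => d _; rewrite mulr1.
Qed.

Variables (m : nat) (dbar : R).

Definition hard_weight : R := (dbar - m%:R) / (D%:R - m%:R).

Definition hard_instance (j : arm) : instance R K D := fun i d =>
  if i == j then dirac D d
  else hard_weight * dirac D d + (1 - hard_weight) * dirac m d.

Hypotheses (D_gt0 : (0 < D)%N) (m_le : m%:R <= dbar) (dbar_lt : dbar < D%:R).

Let m_lt : (m < D)%N.
Proof. by rewrite -(ltr_nat R); apply: le_lt_trans dbar_lt. Qed.

Let m_le_D : m%:R <= D%:R :> R.
Proof. by rewrite ler_nat ltnW. Qed.

Let Dm_gt0 : 0 < D%:R - m%:R :> R.
Proof. by rewrite subr_gt0 ltr_nat. Qed.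

Lemma hard_weight_ge0 : 0 <= hard_weight.
Proof. by rewrite /hard_weight divr_ge0 ?subr_ge0. Qed.

Lemma hard_weight_le1 : hard_weight <= 1.
Proof. by rewrite /hard_weight ler_pdivrMr // mul1r lerD2r ltW. Qed.

Lemma hard_weight_mean : hard_weight * D%:R + (1 - hard_weight) * m%:R = dbar.
Proof.
have -> : hard_weight * D%:R + (1 - hard_weight) * m%:R =
          hard_weight * (D%:R - m%:R) + m%:R by ring.
by rewrite /hard_weight divfK ?gt_eqF // subrK.
Qed.

Lemma hard_instanceP j : is_instance (hard_instance j).
Proof.
have w0 := hard_weight_ge0; have w1 := hard_weight_le1.
split=> [i d|i]; rewrite /hard_instance; case: (i == j).
- by rewrite /dirac.
- by apply: addr_ge0; apply: mulr_ge0; rewrite ?ler0n ?subr_ge0.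
- by rewrite sum_dirac.
rewrite big_split /= -!mulr_sumr !sum_dirac ?(ltnW m_lt) //.
by rewrite !mulr1 subrKC.
Qed.

Lemma hard_instance_late j i (d : delay) : (d < m)%N -> hard_instance j i d = 0.
Proof.
move=> dm; have dD := ltn_trans dm m_lt.
by rewrite /hard_instance /dirac (ltn_eqF dm) (ltn_eqF dD) !mulr0 addr0; case: ifP.
Qed.

Lemma mu_hard_best j : mu (hard_instance j) j = 1.
Proof.
rewrite /mu /hard_instance eqxx (sum_diracM (fun d => d%:R / D%:R)) //.
by rewrite divff // pnatr_eq0 -lt0n.
Qed.

Lemma mu_hard_other j i : i != j -> mu (hard_instance j) i = dbar / D%:R.
Proof.
move=> ij; rewrite /mu /hard_instance (negbTE ij) -hard_weight_mean.
set w := hard_weight; set g := fun d : nat => d%:R / D%:R : R.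
rewrite (eq_bigr (fun d => w * (dirac D d * g d) + (1 - w) * (dirac m d * g d)))
  => [|d _]; last by rewrite mulrDl !mulrA.
rewrite big_split /= -!mulr_sumr !sum_diracM ?(ltnW m_lt) //.
by rewrite /g; ring.
Qed.

Lemma second_largest_hard j :
  (2 <= K)%N -> second_largest_delay (hard_instance j) = dbar.
Proof.
move=> K2; apply: (sort_ge_nth1_peak (j := j)); first by rewrite card_ord.
  by rewrite /dexp mu_hard_best mulr1 ltW.
by move=> i ij; rewrite /dexp mu_hard_other // mulrC divfK // pnatr_eq0 -lt0n.
Qed.

End HardInstance.

Section ProbabilityVector.
Variables (R : realFieldType) (I : finType) (q : I -> R).
Hypothesis qP : (forall i, 0 <= q i) /\ \sum_i q i = 1.

Lemma prob_le1 j : q j <= 1.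
Proof. by have [q_ge0 q_sum1] := qP; rewrite -q_sum1 (bigD1 j) //= lerDl sumr_ge0. Qed.

Lemma probD_le1 i j : i != j -> q i + q j <= 1.
Proof.
have [q_ge0 q_sum1] := qP; move=> ij.
rewrite -q_sum1 (bigD1 i) //= lerD2l (bigD1 j) 1?eq_sym //= lerDl.
exact: sumr_ge0.
Qed.

Lemma one_sub_mean_peak (f : I -> R) j c :
  f j = 1 -> (forall i, i != j -> f i = c) ->
  1 - \sum_i q i * f i = (1 - c) * (1 - q j).
Proof.
have [_ q_sum1] := qP; move=> fj fi; rewrite (bigD1 j) //= fj.
rewrite (eq_bigr (fun i => q i * c)) => [|i ij]; last by rewrite fi.
have -> : \sum_(i | i != j) q i * c = (1 - q j) * c.
  by rewrite -mulr_suml -q_sum1 [in RHS](bigD1 j) //= addrC addrK.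
ring.
Qed.

End ProbabilityVector.

(* R need not be archimedean, so the naturals around x are found below the bound T. *)
Lemma nat_bracket (R : realFieldType) (x : R) T : 0 <= x -> x <= T%:R ->
  exists m n : nat, [/\ m%:R <= x, x <= n%:R, (n <= T)%N & (n <= m.+1)%N].
Proof.
move=> x_ge0; elim: T => [|T IH] xT; first by exists 0%N, 0%N.
have [Tx|xT'] := lerP T.+1%:R x; first by exists T.+1, T.+1.
have [xT''|Tx] := lerP x T%:R.
  by have [m [n [? ? nT ?]]] := IH xT''; exists m, n; split => //; apply: leqW.
by exists T, T.+1; split => //; apply: ltW.
Qed.

Section Regret.
Variables (R : realFieldType) (K D : nat) (alg : policy R K D).
Variables (m n T : nat) (dbar : R).
Hypotheses (algP : is_policy alg) (D_gt0 : (0 < D)%N).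
Hypotheses (m_le : m%:R <= dbar) (dbar_lt : dbar < D%:R).
Hypotheses (n_le_T : (n <= T)%N) (n_le_m : (n <= m.+1)%N).

Definition blind_miss (j : 'I_K) (s : nat) : R :=
  expect_steps (blind_kernel alg) s [::] (fun a => 1 - alg (blind_obs D a) j).

Lemma blind_kernelP : is_kernel (blind_kernel alg).
Proof. by move=> a; apply: algP. Qed.

Lemma blind_missD_ge1 i j s : i != j -> 1 <= blind_miss i s + blind_miss j s.
Proof.
move=> ij; rewrite -expect_stepsD -[X in X <= _](expect_steps_cst blind_kernelP s [::] 1).
apply: (ler_expect_steps blind_kernelP) => a /=; rewrite addrACA -opprD lerBrDr lerD2l.
exact: probD_le1 (algP _) _ _ ij.
Qed.

Lemma pseudo_regret_hard j :
  (1 - dbar / D%:R) * \sum_(s < n) blind_miss j s <=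
  pseudo_regret (hard_instance m dbar j) alg T.
Proof.
set nu := hard_instance m dbar j; set gap := 1 - dbar / D%:R.
have nuP : is_instance nu := hard_instanceP m_le dbar_lt j.
have kP := play_kernelP nuP algP.
have gap_ge0 : 0 <= gap.
  by rewrite subr_ge0 ler_pdivrMr ?ltr0n // mul1r ltW.
have regret_ge : T%:R - expected_reward nu alg T <= pseudo_regret nu alg T.
  rewrite lerD2r -[X in X <= _]mulr1 ler_wpM2l ?ler0n //.
  by rewrite -(mu_hard_best m dbar D_gt0 j); apply: le_bigmax.
have step_regret s : 1 - expect_steps (play_kernel nu alg) s [::]
      (fun h => \sum_i alg (observe h) i * mu nu i) =
    gap * expect_steps (play_kernel nu alg) s [::] (fun h => 1 - alg (observe h) j).
  rewrite -[X in X - _](expect_steps_cst kP s [::] 1) -expect_stepsB -expect_stepsZ.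
  apply: eq_expect_steps => h _; apply: (one_sub_mean_peak (algP _)).
    exact: mu_hard_best.
  by move=> i ij; apply: mu_hard_other.
have step_blind (s : 'I_T) : (s < n)%N ->
    expect_steps (play_kernel nu alg) s [::] (fun h => 1 - alg (observe h) j) =
    blind_miss j s.
  move=> sn; have sm : (s <= m)%N by rewrite -ltnS (leq_trans sn).
  apply: (expect_steps_blind alg nuP (hard_instance_late m_le dbar_lt j)) => //.
    by rewrite add0n ltnW.
  by move=> h sh late; rewrite (observe_blind (m := m)) ?sh.
apply: le_trans regret_ge; rewrite expected_reward_steps //.
have -> : T%:R = \sum_(s < T) (1 : R) by rewrite sumr_const card_ord.
rewrite -sumrB (eq_bigr _ (fun (s : 'I_T) _ => step_regret s)) -mulr_sumr ler_wpM2l //.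
rewrite (big_ord_widen T (blind_miss j) n_le_T) [leRHS](bigID (fun s : 'I_T => (s < n)%N)) /=.
rewrite (eq_bigr _ (fun s sn => esym (step_blind s sn))) lerDl.
apply: sumr_ge0 => s _; apply: (expect_steps_ge0 kP) => h.
by rewrite subr_ge0 (prob_le1 (algP _)).
Qed.

End Regret.

Theorem theorem5 (R : realFieldType) :
  exists c : R, 0 < c /\
  forall (K T D : nat) (dbar : R),
    (2 <= K)%N -> (0 < D)%N ->
    0 <= dbar -> dbar <= D%:R / 2 -> dbar <= T%:R ->
    forall alg : policy R K D, is_policy alg ->
    exists nu : instance R K D,
      is_instance nu /\ second_largest_delay nu = dbar /\
      c * dbar <= pseudo_regret nu alg T.
Proof.
exists (1 / 4); split; first by lra.
move=> K T D dbar K2 D_gt0 dbar_ge0 dbar_le dbar_le_T alg algP.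
have [m [n [m_le dbar_le_n n_le_T n_le_m]]] := nat_bracket dbar_ge0 dbar_le_T.
have Dr_gt0 : 0 < D%:R :> R by rewrite ltr0n.
have dbar_lt : dbar < D%:R by lra.
have gap_ge : 1 / 2 <= 1 - dbar / D%:R.
  have : dbar / D%:R <= 1 / 2 by rewrite ler_pdivrMr //; lra.
  lra.
pose j0 : 'I_K := Ordinal (ltnW K2); pose j1 : 'I_K := Ordinal K2.
pose nu j : instance R K D := hard_instance m dbar j.
pose regret j := pseudo_regret (nu j) alg T.
have miss : n%:R <= \sum_(s < n) (blind_miss alg j0 s + blind_miss alg j1 s).
  rewrite -[n in n%:R]card_ord -sumr_const; apply: ler_sum => s _.
  exact: blind_missD_ge1.
have regret_sum : dbar / 2 <= regret j0 + regret j1.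
  have hard := pseudo_regret_hard algP D_gt0 m_le dbar_lt n_le_T n_le_m.
  apply: le_trans (lerD (hard j0) (hard j1)); rewrite -mulrDr -big_split /=.
  apply: le_trans (_ : 1 / 2 * n%:R <= _); first by lra.
  by apply: ler_pM; rewrite ?ler0n //; lra.
have nuP j : is_instance (nu j) /\ second_largest_delay (nu j) = dbar.
  by split; [apply: hard_instanceP | apply: second_largest_hard].
have [small0|big0] := ltrP (regret j0) (1 / 4 * dbar).
  exists (nu j1); have [? ?] := nuP j1; do 2!split => //.
  by rewrite -/(regret j1); lra.
by exists (nu j0); have [? ?] := nuP j0.
Qed.
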